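(* For all $n\ge3$, the number $|\mathcal C_n^*|$ of essential lattice congruences of the weak order on $S_n$ satisfies $2^{2^{n-2}}\le|\mathcal C_n^*|\le 2^{2^n-2n}$. Since distinct congruences have distinct vertex sets, this is also the number $|\mathcal Q_n|$ of quotient graphs $Q_R$, $R\in\mathcal C_n^*$.
   Context: $S_n$ is the set of permutations of $[n]$ with the weak order (inclusion of inversion sets); a lattice congruence is an equivalence relation compatible with joins and meets. Fences. $]a,b[=\{a+1,\dots,b-1\}$. For $1\le a<b\le n$ and $L\subseteq\,]a,b[$, the fence $f(a,b,L)$ is the set of cover edges joining two permutations that differ by swapping adjacent entries $a,b$, with the values of $L$ to the left of $a,b$ and those of $]a,b[\setminus L$ to the right. Forcing order: $f(a,b,L)\prec f(c,d,M)$ iff $a\le c<d\le b$, $(a,b)\ne(c,d)$, $M=L\cap\,]c,d[$. Reading's theorem. Lattice congruences $R$ correspond bijectively to downsets $F_R$ of the forcing order; a cover edge joins $R$-equivalent permutations iff it lies in a fence of $F_R$. $R$ is essential if $F_R$ contains no fence $f(a,a+1,\emptyset)$; $\mathcal C_n^*$ is the set of essential lattice congruences. The quotient graph $Q_R$ is the undirected cover graph of the lattice quotient $S_n/R$ (vertices are the classes). *)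

From mathcomp Require Import all_boot fingroup perm.
Set Implicit Arguments. Unset Strict Implicit. Unset Printing Implicit Defensive.

(* Permutations of [n] are encoded as w : {perm 'I_n}, with values 0..n-1
   (value v stands for v+1); the one-line notation is w 0, w 1, ..., w (n-1)
   (w maps positions to values). *)

Definition inv_set n (w : {perm 'I_n}) : {set 'I_n * 'I_n} :=
  [set p : 'I_n * 'I_n | (p.1 < p.2) && ((w^-1)%g p.2 < (w^-1)%g p.1)].

Definition weak_le n (u v : {perm 'I_n}) : bool := inv_set u \subset inv_set v.

Definition is_join n (x y j : {perm 'I_n}) : bool :=
  [&& weak_le x j, weak_le y j &
      [forall z, weak_le x z ==> weak_le y z ==> weak_le j z]].

Definition is_meet n (x y m : {perm 'I_n}) : bool :=
  [&& weak_le m x, weak_le m y &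
      [forall z, weak_le z x ==> weak_le z y ==> weak_le z m]].

Definition relS n := {ffun {perm 'I_n} * {perm 'I_n} -> bool}.

Definition equivalence_rel n (R : relS n) : bool :=
  [&& [forall x, R (x, x)],
      [forall x, forall y, R (x, y) ==> R (y, x)] &
      [forall x, forall y, forall z, R (x, y) ==> R (y, z) ==> R (x, z)]].

Definition lattice_congruence n (R : relS n) : bool :=
  [&& equivalence_rel R,
      [forall x, forall y, forall z, forall j1, forall j2,
         R (x, y) ==> is_join x z j1 ==> is_join y z j2 ==> R (j1, j2)] &
      [forall x, forall y, forall z, forall m1, forall m2,
         R (x, y) ==> is_meet x z m1 ==> is_meet y z m2 ==> R (m1, m2)]].

(* Essential: F_R contains no fence f(a,a+1,emptyset), i.e. no cover edge
   swapping two adjacent entries with consecutive values a, a+1 joins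
   R-equivalent permutations.  Swapping positions i, i+1 of w gives
   tperm i j * w (since (s * t) k = t (s k)). *)
Definition essential n (R : relS n) : bool :=
  [forall i : 'I_n, forall j : 'I_n, forall w : {perm 'I_n},
     ((val j == (val i).+1) &&
      ((val (w j) == (val (w i)).+1) || (val (w i) == (val (w j)).+1)))
     ==> ~~ R (w, (tperm i j * w)%g)].

Definition essential_congruences n : {set relS n} :=
  [set R : relS n | lattice_congruence R && essential R].

From mathcomp Require Import all_boot fingroup perm zify.
Set Implicit Arguments. Unset Strict Implicit. Unset Printing Implicit Defensive.

(* A lattice congruence of the weak order is determined by the
   join-irreducible cover relations it contracts; the join-irreducibles are the
   permutations v with a single descent, v covers exactly one permutation (swap
   the descent), and v is determined by the set of values before its descent,
   its first block.  First blocks are never initial segments, and an essential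
   congruence contracts none of the n - 1 atoms, whose first blocks are
   {1, ..., b-1} u {b+1}.  So a congruence in C_n^* is determined by a subset of
   the remaining 2^n - 2n sets.

   For a family S of sets L of values strictly between 1 and n,
   merge w with w (1 n) whenever 1 stands immediately left of n in w and the
   values to their left form a set in S: this contracts exactly the fences
   f(1, n, L), L in S.  The relation is compatible with joins and meets, it is
   essential because 1 and n are not consecutive, and it determines S. *)

Notation pos w x := ((w^-1)%g x).

Lemma connect_sub_trans (T : finType) (e e' : rel T) :
  transitive e' -> subrel e e' -> forall x y, connect e x y -> (x == y) || e' x y.
Proof.
move=> tr sub x y /connectP [p]; elim: p x => [|z p IH] x /=; first by move=> _ ->; rewrite eqxx.
case/andP => /sub exz /IH {}IH /IH /orP [/eqP <- | ezy]; first by rewrite exz orbT.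
by rewrite (tr _ _ _ exz ezy) orbT.
Qed.

Lemma exists_descent_nat (f : nat -> nat) p q :
  p <= q -> f q < f p -> exists2 r, p <= r < q & f r.+1 < f r.
Proof.
elim: q => [|q IH] pq fqp; first by move: pq fqp; rewrite leqn0 => /eqP ->; rewrite ltnn.
have {}pq : p <= q by rewrite leq_eqVlt in pq; case/orP: pq => [/eqP pq|//]; rewrite pq ltnn in fqp.
case: (ltnP (f q.+1) (f q)) => fq; first by exists q => //; rewrite pq ltnSn.
have [r /andP [pr rq] fr] := IH pq (leq_ltn_trans fq fqp).
by exists r => //; rewrite pr ltnS (ltnW rq).
Qed.

(** * The weak order *)

Section WeakOrder.
Variable n : nat.
Implicit Types (u v w x y z s : {perm 'I_n}) (a b c i j p q : 'I_n).

Lemma card_ltn_ord m : m <= n -> #|[set k : 'I_n | k < m]| = m.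
Proof.
move=> mn; have -> : [set k : 'I_n | k < m] = widen_ord mn @: setT.
  apply/setP => k; rewrite inE; apply/idP/imsetP => [km | [l _ ->]]; last by rewrite /= ltn_ord.
  by exists (Ordinal km) => //; apply: val_inj.
by rewrite card_imset ?cardsT ?card_ord // => k l /(congr1 val) /= /val_inj.
Qed.

Lemma card_ltn_perm s a : #|[set b | s b < s a]| = s a.
Proof.
have -> : [set b | s b < s a] = s @^-1: [set k : 'I_n | k < s a] by apply/setP => b; rewrite !inE.
by rewrite card_preimset ?card_ltn_ord //; [apply: ltnW | apply: perm_inj].
Qed.

Lemma perm_order_inj s s' : (forall a b, (s a < s b) = (s' a < s' b)) -> s = s'.
Proof.
move=> E; apply/permP => a; apply: val_inj; rewrite /= -(card_ltn_perm s a) -(card_ltn_perm s' a).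
by apply: eq_card => b; rewrite !inE E.
Qed.

Lemma perm_of_total_order (lt : rel 'I_n) :
  irreflexive lt -> transitive lt -> (forall a b, a != b -> lt a b || lt b a) ->
  exists s, forall a b, (s a < s b) = lt a b.
Proof.
move=> irr tr tot; pose rank a := #|[set b | lt b a]|.
have rank_lt a : rank a < n.
  rewrite -[n]card_ord -cardsT; apply: proper_card; rewrite properT.
  by apply/eqP => /setP /(_ a); rewrite !inE irr.
have rank_mono a b : lt a b -> rank a < rank b.
  move=> ab; apply: proper_card; apply/properP; split; last by exists a; rewrite !inE ?irr.
  by apply/subsetP => c; rewrite !inE => /tr; apply.
have rankE a b : (rank a < rank b) = lt a b.
  apply/idP/idP => [|/rank_mono //].
  case: (eqVneq a b) => [-> | /tot /orP [//|/rank_mono ba]]; first by rewrite ltnn.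
  by rewrite ltnNge ltnW.
have rank_inj : injective (fun a => Ordinal (rank_lt a)).
  move=> a b /(congr1 val) /= ab; apply/eqP; apply: contraT => /tot.
  by rewrite -!rankE ab ltnn.
by exists (perm rank_inj) => a b; rewrite !permE /= rankE.
Qed.

Lemma eq_pos w a b : (pos w a == pos w b :> nat) = (a == b).
Proof. by rewrite val_eqE (inj_eq perm_inj). Qed.

Definition inversion w a b := (a < b) && (pos w b < pos w a).
Definition noninversion w a b := (a < b) && (pos w a < pos w b).

Lemma noninversionE w a b : a < b -> noninversion w a b = ~~ inversion w a b.
Proof.
by move=> ab; rewrite /noninversion /inversion ab /= -leqNgt ltn_neqAle eq_pos neq_ltn ab.
Qed.

Lemma weak_leP u v : reflect (forall a b, inversion u a b -> inversion v a b) (weak_le u v).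
Proof.
apply: (iffP subsetP) => [uv a b | uv [a b]]; last by rewrite !inE; apply: uv.
by have := uv (a, b); rewrite !inE; apply.
Qed.

Lemma weak_le_noninvP u v :
  reflect (forall a b, noninversion v a b -> noninversion u a b) (weak_le u v).
Proof.
apply: (iffP (weak_leP u v)) => uv a b.
  move=> nv; have /andP [ab _] := nv; move: nv.
  by rewrite !noninversionE //; apply: contra; apply: uv.
move=> iu; have /andP [ab _] := iu; move: iu.
by apply: contraTT; rewrite -!noninversionE //; apply: uv.
Qed.

Lemma weak_le_refl u : weak_le u u.
Proof. exact: subxx. Qed.

Lemma weak_le_trans u v w : weak_le u v -> weak_le v w -> weak_le u w.
Proof. exact: subset_trans. Qed.

Lemma weak_le_anti u v : weak_le u v -> weak_le v u -> u = v.
Proof.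
move=> uv vu; have {uv vu}E a b : inversion u a b = inversion v a b.
  by apply/idP/idP; [move/weak_leP: uv; apply | move/weak_leP: vu; apply].
apply: invg_inj; apply: perm_order_inj => a b; case: (ltngtP a b) => [ab|ba|/val_inj->].
- by have := congr1 negb (E a b); rewrite -!noninversionE // /noninversion ab.
- by have := E b a; rewrite /inversion ba.
- by rewrite !ltnn.
Qed.

Lemma card_inv_set_lt u v : weak_le u v -> u != v -> #|inv_set u| < #|inv_set v|.
Proof.
move=> uv nuv; apply: proper_card; rewrite properEneq; apply/andP; split=> //.
by apply: contra nuv => /eqP E; apply/eqP/weak_le_anti; rewrite // /weak_le E.
Qed.

Definition lt_transitive (P : rel 'I_n) :=
  forall a b c, a < b -> b < c -> P a b -> P b c -> P a c.

Definition lt_cotransitive (P : rel 'I_n) :=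
  forall a b c, a < b -> b < c -> P a c -> P a b || P b c.

Lemma perm_of_inversions (I : rel 'I_n) : lt_transitive I -> lt_cotransitive I ->
  exists w, forall a b, a < b -> inversion w a b = I a b.
Proof.
move=> trI cotrI.
pose before a b := if a < b then ~~ I a b else if b < a then I b a else false.
have irr : irreflexive before by move=> a; rewrite /before ltnn.
have tot a b : a != b -> before a b || before b a.
  by rewrite /before neq_ltn; case: (ltngtP a b) => //= _; [case: (I a b) | case: (I b a)].
have tr : transitive before.
  move=> b a c; rewrite /before.
  case: (ltngtP a b) => ab //; case: (ltngtP b c) => bc //.
  - rewrite (ltn_trans ab bc) => nab nbc; apply: contra nab => /(cotrI _ _ _ ab bc).
    by rewrite (negbTE nbc) orbF.
  - move=> nab Icb; case: (ltngtP a c) => ac.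
    + by apply: contra nab => Iac; apply: trI ac bc Iac Icb.
    + by move: (cotrI _ _ _ ac ab Icb); rewrite (negbTE nab) orbF.
    + by move: ac Icb nab => /val_inj ->; rewrite /= => ->.
  - move=> Iba nbc; case: (ltngtP a c) => ac.
    + by apply: contra nbc => Iac; apply: trI ab ac Iba Iac.
    + by move: (cotrI _ _ _ bc ac Iba); rewrite (negbTE nbc).
    + by move: ac Iba nbc => /val_inj ->; rewrite /= => ->.
  - move=> Iba Icb; have ca := ltn_trans bc ab.
    by rewrite ltnNge (ltnW ca) /= ca; apply: trI bc ab Icb Iba.
have [s Hs] := perm_of_total_order irr tr tot.
exists (s^-1)%g => a b ab; rewrite /inversion invgK ab Hs /before.
by rewrite ltnNge (ltnW ab) /= ab.
Qed.

Lemma noninversion_trans w : transitive (noninversion w).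
Proof.
move=> b a c /andP [ab pab] /andP [bc pbc].
by rewrite /noninversion (ltn_trans ab bc) (ltn_trans pab pbc).
Qed.

Lemma noninversion_cotrans w : lt_cotransitive (noninversion w).
Proof.
move=> a b c ab bc /andP [_ pac]; rewrite /noninversion ab bc /=.
by case: (ltnP (pos w a) (pos w b)) => // pba; rewrite (leq_ltn_trans pba pac).
Qed.

Lemma lt_cotrans_orb (P Q : rel 'I_n) :
  lt_cotransitive P -> lt_cotransitive Q -> lt_cotransitive [rel a b | P a b || Q a b].
Proof.
move=> cP cQ a b c ab bc /= /orP [/(cP _ _ _ ab bc) | /(cQ _ _ _ ab bc)] /orP [] ->;
  by rewrite ?orbT.
Qed.

Lemma lt_cotrans_connect (U : rel 'I_n) :
  lt_cotransitive U -> lt_cotransitive (fun a b => (a < b) && connect U a b).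
Proof.
move=> cU a b c ab bc /andP [ac /connectP [p]].
elim: p a ab ac => [|d p IH] a ab ac /=; first by move=> _ ca; rewrite ca ltnn in ac.
case/andP => Uad Up lst; have dc : connect U d c by apply/connectP; exists p.
case: (ltngtP b d) => bd.
- case/orP: (cU _ _ _ ab bd Uad) => [Uab | Ubd]; first by rewrite ab connect1.
  by rewrite bc (connect_trans (connect1 Ubd) dc) orbT.
- case/orP: (IH d bd (ltn_trans bd bc) Up lst) => [/andP [_ db] | ->]; last by rewrite orbT.
  by rewrite ab (connect_trans (connect1 Uad) db).
- by move: bd Uad => /val_inj <- Uab; rewrite ab connect1.
Qed.

Lemma meet_exists x z : exists m, is_meet x z m.
Proof.
(* The noninversions of the meet are the transitive closure of those of x and z. *)
pose U := [rel a b | noninversion x a b || noninversion z a b].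
pose C a b := (a < b) && connect U a b.
have cotrC : lt_cotransitive C.
  exact/lt_cotrans_connect/lt_cotrans_orb/noninversion_cotrans/noninversion_cotrans.
have [m Hm] : exists m, forall a b, a < b -> inversion m a b = ~~ C a b.
  apply: perm_of_inversions => a b c ab bc.
    by move=> nCab nCbc; apply: contra (cotrC _ _ _ ab bc) _; rewrite negb_or nCab.
  rewrite -negb_and; apply: contra => /andP [/andP [_ Cab] /andP [_ Cbc]].
  by rewrite /C (ltn_trans ab bc) (connect_trans Cab Cbc).
have nonm a b : noninversion m a b = C a b.
  case: (ltnP a b) => ab; first by rewrite noninversionE // Hm // negbK.
  by rewrite /noninversion /C ltnNge ab.
have le_m y : (forall a b, noninversion y a b -> U a b) -> weak_le m y.
  move=> yU; apply/weak_le_noninvP => a b /[dup] /andP [ab _] /yU Uab.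
  by rewrite nonm /C ab connect1.
exists m; apply/and3P; split.
- by apply: le_m => a b /= ->.
- by apply: le_m => a b /= ->; rewrite orbT.
apply/forallP => w; apply/implyP => /weak_le_noninvP wx; apply/implyP => /weak_le_noninvP wz.
have Uw : subrel U (noninversion w) by move=> a b /orP [/wx | /wz].
apply/weak_le_noninvP => a b; rewrite nonm => /andP [ab].
by case/(connect_sub_trans (@noninversion_trans w) Uw)/orP => // /eqP ba; rewrite ba ltnn in ab.
Qed.

Definition pswap w i j := (tperm i j * w)%g.

Definition swapped i j p q := ((p == i) && (q == j)) || ((p == j) && (q == i)).

Definition descent w i j := ((j : nat) == i.+1) && (w j < w i).

Lemma pswapE w i j p : pswap w i j p = w (tperm i j p).
Proof. exact: permM. Qed.

Lemma pos_pswap w i j a : pos (pswap w i j) a = tperm i j (pos w a).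
Proof. by rewrite invMg permM tpermV. Qed.

Lemma swappedC i j p q : swapped i j p q = swapped i j q p.
Proof. by rewrite /swapped orbC andbC [(q == j) && _]andbC. Qed.

Lemma tperm_adj_ltn i j p q : j = i.+1 :> nat -> ~~ swapped i j p q ->
  (tperm i j p < tperm i j q) = (p < q).
Proof.
rewrite /swapped => ji; case: tpermP => [->|->|/eqP pi /eqP pj];
  case: tpermP => [->|->|/eqP qi /eqP qj]; rewrite ?eqxx //= ?andbF ?andbT;
  repeat match goal with H : is_true (_ != _) |- _ => move: H end;
  rewrite -!val_eqE /= ji ?orbT // => *; apply/idP/idP; lia.
Qed.

Lemma inversion_pswap w i j a b : j = i.+1 :> nat -> ~~ swapped i j (pos w a) (pos w b) ->
  inversion (pswap w i j) a b = inversion w a b.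
Proof. by move=> ji sw; rewrite /inversion !pos_pswap tperm_adj_ltn // swappedC. Qed.

Lemma swapped_descent v i j a b : a < b -> v j < v i ->
  swapped i j (pos v a) (pos v b) -> pos v a = j /\ pos v b = i.
Proof.
move=> ab vji /orP [] /andP [/eqP ai /eqP bj] //.
by move: ab vji; rewrite -ai -bj !permKV => /ltn_trans h /h; rewrite ltnn.
Qed.

Lemma pswap_le v i j : descent v i j -> weak_le (pswap v i j) v.
Proof.
case/andP => /eqP ji vji; apply/weak_leP => a b iab; have /andP [ab _] := iab.
case sw : (swapped i j (pos v a) (pos v b)); last by move: iab; rewrite inversion_pswap ?sw.
by have [va vb] := swapped_descent ab vji sw; rewrite /inversion ab va vb ji ltnSn.
Qed.

Lemma pswap_neq v i j : descent v i j -> pswap v i j != v.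
Proof.
case/andP => _ vji; apply/eqP => /(congr1 (fun w => w i)).
by rewrite pswapE tpermL => vij; rewrite vij ltnn in vji.
Qed.

Lemma descent_below u v : weak_le u v -> u != v ->
  exists i j, descent v i j && weak_le u (pswap v i j).
Proof.
(* An inversion (a, b) of v that u lacks straddles a descent of v that u lacks too. *)
move=> uv nuv; have /subsetPn [[a b]] : ~~ weak_le v u.
  by apply: contra nuv => vu; rewrite (weak_le_anti uv vu).
rewrite !inE /= => /andP [ab vba] /negP uab.
pose g k := pos u (v (insubd a k)).
have gE (k : 'I_n) : g k = pos u (v k) by rewrite /g valKd.
have [r /andP [_ ra] gr] : exists2 r, pos v b <= r < pos v a & g r.+1 < g r.
  apply: exists_descent_nat (ltnW vba) _; rewrite !gE !permKV.
  by have /andP [] : noninversion u a b by rewrite noninversionE //; apply/negP.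
have rn : r.+1 < n := leq_ltn_trans ra (ltn_ord _).
pose i := Ordinal (ltnW rn); pose j := Ordinal rn.
have {gr}uji : pos u (v j) < pos u (v i) by rewrite -!gE.
have vji : v j < v i.
  case: (ltngtP (v j) (v i)) => // [vij | /val_inj /perm_inj /(congr1 val) /=]; last lia.
  have : inversion u (v i) (v j) by rewrite /inversion vij uji.
  by move/weak_leP: uv => /[apply]; rewrite /inversion !permK /= => /andP [_]; lia.
exists i, j; rewrite /descent eqxx vji /=; apply/weak_leP => c d ucd.
case sw : (swapped i j (pos v c) (pos v d)).
  have /andP [cd _] := ucd; have [vc vd] := swapped_descent cd vji sw.
  move: ucd; have -> : c = v j by rewrite -vc permKV.
  have -> : d = v i by rewrite -vd permKV.
  by case/andP => _; rewrite ltnNge (ltnW uji).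
by rewrite inversion_pswap ?sw //; move/weak_leP: uv; apply.
Qed.

Lemma join_pswap v i j i' j' : descent v i j -> descent v i' j' -> i != i' ->
  is_join (pswap v i j) (pswap v i' j') v.
Proof.
move=> dij dij' ii'; rewrite /is_join !pswap_le //=.
apply/forallP => w; apply/implyP => /weak_leP le1; apply/implyP => /weak_leP le2.
apply/weak_leP => a b iab; have /andP [ab _] := iab.
case/andP: dij dij' => /eqP ji vji /andP [/eqP ji' vji'].
case sw : (swapped i j (pos v a) (pos v b)); last by apply: le1; rewrite inversion_pswap ?sw.
case sw' : (swapped i' j' (pos v a) (pos v b)); last by apply: le2; rewrite inversion_pswap ?sw'.
have [_ vb] := swapped_descent ab vji sw; have [_ vb'] := swapped_descent ab vji' sw'.
by rewrite -vb -vb' eqxx in ii'.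
Qed.

End WeakOrder.

(** * Lattice congruences *)

Section JoinMeet.
Variable n : nat.
Implicit Types (a c m u w x z : {perm 'I_n}).

Lemma is_meet_lel x z m : is_meet x z m -> weak_le m x.
Proof. by case/and3P. Qed.

Lemma is_meet_ler x z m : is_meet x z m -> weak_le m z.
Proof. by case/and3P. Qed.

Lemma is_meet_glb x z m w : is_meet x z m -> weak_le w x -> weak_le w z -> weak_le w m.
Proof. by case/and3P => _ _ /forallP /(_ w) /implyP h /h /implyP. Qed.

Lemma is_join_gel x z m : is_join x z m -> weak_le x m.
Proof. by case/and3P. Qed.

Lemma is_join_ger x z m : is_join x z m -> weak_le z m.
Proof. by case/and3P. Qed.

Lemma is_join_lub x z m w : is_join x z m -> weak_le x w -> weak_le z w -> weak_le m w.
Proof. by case/and3P => _ _ /forallP /(_ w) /implyP h /h /implyP. Qed.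

Lemma is_meetC x z m : is_meet x z m -> is_meet z x m.
Proof.
move=> xzm; rewrite /is_meet (is_meet_ler xzm) (is_meet_lel xzm) /=.
by apply/forallP => w; apply/implyP => wz; apply/implyP => wx; apply: is_meet_glb xzm wx wz.
Qed.

Lemma is_meet_idl u a : weak_le u a -> is_meet u a u.
Proof.
move=> ua; rewrite /is_meet weak_le_refl ua /=.
by apply/forallP => w; apply/implyP => wu; apply/implyP.
Qed.

Lemma is_meet_idr u a : weak_le a u -> is_meet u a a.
Proof.
move=> au; rewrite /is_meet weak_le_refl au /=.
by apply/forallP => w; apply/implyP => wu; apply/implyP.
Qed.

Lemma is_join_idr c a : weak_le c a -> is_join c a a.
Proof.
move=> ca; rewrite /is_join weak_le_refl ca /=.
by apply/forallP => w; apply/implyP => cw; apply/implyP.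
Qed.

Lemma is_join_uniq x z j1 j2 : is_join x z j1 -> is_join x z j2 -> j1 = j2.
Proof.
move=> xj1 xj2; apply: weak_le_anti.
  exact: is_join_lub xj1 (is_join_gel xj2) (is_join_ger xj2).
exact: is_join_lub xj2 (is_join_gel xj1) (is_join_ger xj1).
Qed.

Lemma is_meet_uniq x z m1 m2 : is_meet x z m1 -> is_meet x z m2 -> m1 = m2.
Proof.
move=> xm1 xm2; apply: weak_le_anti.
  exact: is_meet_glb xm2 (is_meet_lel xm1) (is_meet_ler xm1).
exact: is_meet_glb xm1 (is_meet_lel xm2) (is_meet_ler xm2).
Qed.

End JoinMeet.

Section LatticeCongruence.
Variables (n : nat) (R : relS n).
Hypothesis lcR : lattice_congruence R.
Implicit Types (a b c u v x y z : {perm 'I_n}).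

Lemma congr_refl x : R (x, x).
Proof. by have /and3P [/and3P [/forallP refl _ _] _ _] := lcR; apply: refl. Qed.

Lemma congr_sym {x y} : R (x, y) -> R (y, x).
Proof.
move=> Rxy; have /and3P [/and3P [_ /forallP S _] _ _] := lcR.
by move: (S x) => /forallP/(_ y); rewrite Rxy.
Qed.

Lemma congr_trans {x y z} : R (x, y) -> R (y, z) -> R (x, z).
Proof.
move=> Rxy Ryz; have /and3P [/and3P [_ _ /forallP T] _ _] := lcR.
by move: (T x) => /forallP/(_ y)/forallP/(_ z); rewrite Rxy Ryz.
Qed.

Lemma congr_join x y z j1 j2 : R (x, y) -> is_join x z j1 -> is_join y z j2 -> R (j1, j2).
Proof.
move=> Rxy xzj yzj; have /and3P [_ /forallP J _] := lcR.
by move: (J x) => /forallP/(_ y)/forallP/(_ z)/forallP/(_ j1)/forallP/(_ j2); rewrite Rxy xzj yzj.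
Qed.

Lemma congr_meet x y z m1 m2 : R (x, y) -> is_meet x z m1 -> is_meet y z m2 -> R (m1, m2).
Proof.
move=> Rxy xzm yzm; have /and3P [_ _ /forallP M] := lcR.
by move: (M x) => /forallP/(_ y)/forallP/(_ z)/forallP/(_ m1)/forallP/(_ m2); rewrite Rxy xzm yzm.
Qed.

Lemma congr_interval u a v : R (u, v) -> weak_le u a -> weak_le a v -> R (u, a).
Proof. by move=> Ruv ua av; apply: congr_meet Ruv (is_meet_idl ua) (is_meet_idr av). Qed.

Lemma congr_join_cover c v i j i' j' : descent v i j -> descent v i' j' -> i != i' ->
  weak_le c (pswap v i j) -> R (c, pswap v i' j') -> R (pswap v i j, v).
Proof.
move=> dij dij' ii' ca Rcb; apply: congr_join Rcb (is_join_idr ca) _.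
by apply: join_pswap; rewrite // eq_sym.
Qed.

End LatticeCongruence.

(** * Upper bound: contracted join-irreducibles *)

Section SingleDescent.
Variable n : nat.
Implicit Types (v w : {perm 'I_n}) (i j p q x y : 'I_n).

Definition single_descent v i j :=
  descent v i j && [forall i', forall j', descent v i' j' ==> (i' == i)].

Definition first_block v i : {set 'I_n} := [set x | pos v x <= i].

Lemma single_descent_ltn v i j p q : single_descent v i j ->
  p < q -> (q <= i) || (i < p) -> v p < v q.
Proof.
case/andP => _ /forallP only pq blk.
case: (ltngtP (v p) (v q)) => // [vqp | /val_inj /perm_inj epq]; last by rewrite epq ltnn in pq.
pose f k := v (insubd p k); have fE (k : 'I_n) : f k = v k by rewrite /f valKd.
have [r /andP [pr rq] fr] : exists2 r, p <= r < q & f r.+1 < f r.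
  by apply: exists_descent_nat (ltnW pq) _; rewrite !fE.
have rn : r.+1 < n := leq_ltn_trans rq (ltn_ord q).
have : descent v (Ordinal (ltnW rn)) (Ordinal rn) by rewrite /descent eqxx -!fE.
move/forallP: (only (Ordinal (ltnW rn))) => /(_ (Ordinal rn)) /implyP/[apply].
by move=> /eqP /(congr1 val) /= ri; move: blk; lia.
Qed.

Lemma single_descent_order v i j p q : single_descent v i j ->
  (p <= i) = (q <= i) -> (v p < v q) = (p < q).
Proof.
move=> sd blk; case: (ltngtP p q) => [pq | qp | /val_inj -> ]; last by rewrite ltnn.
- by apply: single_descent_ltn sd pq _; case: (leqP p i) blk => [_ <- | ip _]; rewrite ?ip ?orbT.
- apply/negbTE; rewrite -leqNgt ltnW //.
  by apply: single_descent_ltn sd qp _; case: (leqP q i) blk => [_ -> | iq _]; rewrite ?iq ?orbT.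
Qed.

Lemma single_descent_ltn_pos v i j x y : single_descent v i j ->
  (pos v x < pos v y) =
    if (x \in first_block v i) == (y \in first_block v i) then x < y
    else x \in first_block v i.
Proof.
move=> sd; rewrite !inE.
case: (leqP (pos v x) i) => xi; case: (leqP (pos v y) i) => yi /=.
- by rewrite -(single_descent_order sd) ?permKV // xi yi.
- exact: leq_ltn_trans yi.
- by apply/negbTE; rewrite -leqNgt ltnW // (leq_ltn_trans yi).
- by rewrite -(single_descent_order sd) ?permKV // leqNgt xi leqNgt yi.
Qed.

Lemma card_first_block v i : #|first_block v i| = i.+1.
Proof.
have -> : first_block v i = (v^-1)%g @^-1: [set k : 'I_n | k < i.+1].
  by apply/setP => x; rewrite !inE.
by rewrite card_preimset ?card_ltn_ord //; apply: perm_inj.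
Qed.

Lemma single_descent_inj v w i j i' j' : single_descent v i j -> single_descent w i' j' ->
  first_block v i = first_block w i' -> [/\ v = w, i = i' & j = j'].
Proof.
move=> sdv sdw E.
have vw : v = w.
  apply/invg_inj/perm_order_inj => x y.
  by rewrite (single_descent_ltn_pos _ _ sdv) E -(single_descent_ltn_pos _ _ sdw).
have ii' : i = i' by apply/val_inj/succn_inj; rewrite -!(card_first_block v) {2}vw E.
case/andP: sdv sdw => /andP [/eqP ji _] _ /andP [/andP [/eqP ji' _] _].
by split=> //; apply: val_inj; rewrite /= ji ji' ii'.
Qed.

Definition initial_seg (k : nat) : {set 'I_n} := [set x : 'I_n | x < k].

(* The first block of the atom exchanging the values b and b.+1. *)
Definition atom_block (b : nat) : {set 'I_n} := [set x : 'I_n | (x < b) || (x == b.+1 :> nat)].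

Definition essential_blocks : {set {set 'I_n}} :=
  [set A | ~~ [exists k : 'I_n.+1, A == initial_seg k]
        && ~~ [exists b : 'I_n.-1, A == atom_block b]].

Lemma first_block_essential (R : relS n) v i j : essential R ->
  single_descent v i j -> R (v, pswap v i j) -> first_block v i \in essential_blocks.
Proof.
move=> ess sd Rv; have /andP [/andP [/eqP ji vji] _] := sd.
have viA : v i \in first_block v i by rewrite inE permK.
have vjA : v j \notin first_block v i by rewrite inE permK -ltnNge ji.
have maxA x : x \in first_block v i -> x <= v i.
  move=> xA; rewrite leqNgt; apply/negP => vix.
  have := single_descent_ltn_pos (v i) x sd; rewrite viA xA eqxx vix permK => ix.
  by rewrite inE leqNgt ix in xA.
have minC x : x \notin first_block v i -> v j <= x.
  move=> xA; rewrite leqNgt; apply/negP => xvj.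
  have := single_descent_ltn_pos x (v j) sd; rewrite (negbTE xA) (negbTE vjA) eqxx xvj permK.
  by rewrite inE -ltnNge in xA; lia.
rewrite inE; apply/andP; split; apply/negP.
  case/existsP => k /eqP E; move: viA vjA; rewrite E !inE => vik.
  by rewrite (ltn_trans vji vik).
case/existsP => b /eqP E.
have b1n : b.+1 < n by have := ltn_ord b; lia.
have vib : v i = b.+1 :> nat.
  have := maxA (Ordinal b1n); move: viA; rewrite E !inE /= eqxx orbT; lia.
have vjb : v j = b :> nat.
  have := minC (Ordinal (ltnW b1n)); move: vjA; rewrite E !inE /= ltnn; lia.
move/forallP: ess => /(_ i) /forallP /(_ j) /forallP /(_ v) /implyP.
by rewrite /= ji vib vjb !eqxx orbT => /(_ isT) /negP.
Qed.

Lemma card_atom_block b : b.+1 < n -> #|atom_block b| = b.+1.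
Proof.
move=> b1n; have bn := ltnW b1n.
have : initial_seg b.+2 = Ordinal bn |: atom_block b.
  apply/setP => x; rewrite !inE -val_eqE /= ltnS leq_eqVlt ltnS leq_eqVlt.
  by case: (ltngtP x b) => //=; rewrite ?orbT ?orbF.
move/(congr1 (fun A : {set 'I_n} => #|A|)).
rewrite cardsU1 /initial_seg card_ltn_ord // !inE /= ltnn.
by rewrite ltn_eqF // add1n => /succn_inj ->.
Qed.

Lemma initial_seg_neq_atom_block k b : b.+1 < n -> initial_seg k != atom_block b.
Proof.
move=> b1n; apply/eqP => /setP E; move: (E (Ordinal b1n)) (E (Ordinal (ltnW b1n))).
rewrite !inE /= eqxx orbT ltnn ltn_eqF // => b1k.
by rewrite (ltn_trans (ltnSn b) b1k).
Qed.

Lemma card_essential_blocks : #|essential_blocks| <= 2 ^ n - 2 * n.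
Proof.
pose f (s : 'I_n.+1 + 'I_n.-1) := match s with inl k => initial_seg k | inr b => atom_block b end.
have kn (k : 'I_n.+1) : k <= n by rewrite -ltnS.
have b1n (b : 'I_n.-1) : b.+1 < n by rewrite -ltn_predRL.
have f_inj : injective f.
  case=> [k|b] [k'|b']; rewrite /f; cbn -[initial_seg atom_block];
    move=> /[dup] E /(congr1 (fun A : {set 'I_n} => #|A|)).
  - by rewrite /initial_seg !card_ltn_ord ?kn // => /val_inj ->.
  - by have /eqP/(_ E) := initial_seg_neq_atom_block k (b1n b').
  - by have /eqP/(_ (esym E)) := initial_seg_neq_atom_block k' (b1n b).
  - by rewrite !card_atom_block // => /succn_inj /val_inj ->.
have : #|f @: setT| <= #|~: essential_blocks|.
  apply/subset_leq_card/subsetP => A /imsetP [[k|b] _ ->]; rewrite !inE negb_and !negbK.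
    by apply/orP; left; apply/existsP; exists k.
  by apply/orP; right; apply/existsP; exists b.
rewrite card_imset // cardsT card_sum !card_ord => le_compl.
have := cardsC essential_blocks; rewrite -cardsT -powersetT card_powerset cardsT card_ord => <-.
lia.
Qed.

End SingleDescent.

Section Determination.
Variables (n : nat) (R R' : relS n).
Hypotheses (lcR : lattice_congruence R) (lcR' : lattice_congruence R').
Hypothesis contract : forall v i j,
  single_descent v i j -> R (v, pswap v i j) -> R' (v, pswap v i j).

Lemma congr_sub_below u v : weak_le u v -> R (u, v) -> R' (u, v).
Proof.
(* With a := pswap v i j a lower cover of v above u,
   R' (u, a) by induction; R' (a, v) comes from [contract] if v is join-irreducible,
   and otherwise from a join with a of an edge below another lower cover of v. *)
have [k] := ubnP #|inv_set v|; elim: k => // k IH in u v *; rewrite ltnS => vk uv Ruv.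
case: (eqVneq u v) => [-> | nuv]; first exact: congr_refl.
have [i [j /andP [dij ua]]] := descent_below uv nuv.
have IHd i' j' x : descent v i' j' ->
    weak_le x (pswap v i' j') -> R (x, pswap v i' j') -> R' (x, pswap v i' j').
  move=> d xw Rxw; apply: IH xw Rxw.
  exact: leq_trans (card_inv_set_lt (pswap_le d) (pswap_neq d)) vk.
have Rua := congr_interval lcR Ruv ua (pswap_le dij).
apply: (congr_trans lcR' (IHd _ _ _ dij ua Rua)).
case sd : (single_descent v i j).
  have Rav := congr_trans lcR (congr_sym lcR Rua) Ruv.
  by apply: (congr_sym lcR'); apply: contract sd (congr_sym lcR Rav).
move: sd; rewrite /single_descent dij => /forallPn [i' /forallPn [j']].
rewrite negb_imply => /andP [dij' ii'].
have [c uc] := meet_exists u (pswap v i' j').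
have Rcb := congr_meet lcR Ruv uc (is_meet_idr (pswap_le dij')).
have R'cb := IHd _ _ _ dij' (is_meet_ler uc) Rcb.
have ca := weak_le_trans (is_meet_lel uc) ua.
by apply: (congr_join_cover lcR' dij dij' _ ca R'cb); rewrite eq_sym.
Qed.

Lemma congr_sub x y : R (x, y) -> R' (x, y).
Proof.
move=> Rxy; have [m xym] := meet_exists x y.
have Rmx := congr_meet lcR (congr_sym lcR Rxy) (is_meetC xym) (is_meet_idl (weak_le_refl x)).
have Rmy := congr_meet lcR Rxy xym (is_meet_idl (weak_le_refl y)).
apply: (congr_trans lcR' (congr_sym lcR' (congr_sub_below (is_meet_lel xym) Rmx))).
exact: congr_sub_below (is_meet_ler xym) Rmy.
Qed.

End Determination.

Definition contracted_blocks n (R : relS n) : {set {set 'I_n}} :=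
  [set A | [exists v, exists i, exists j,
     [&& single_descent v i j, first_block v i == A & R (v, pswap v i j)]]].

Lemma contracted_blocks_sub n (R : relS n) :
  essential R -> contracted_blocks R \subset essential_blocks n.
Proof.
move=> ess; apply/subsetP => A; rewrite inE.
case/existsP => v /existsP [i /existsP [j /and3P [sd /eqP <- Rv]]].
exact: first_block_essential Rv.
Qed.

Lemma contracted_blocks_inj n :
  {in [pred R : relS n | lattice_congruence R] &, injective (@contracted_blocks n)}.
Proof.
have sub (R R' : relS n) : lattice_congruence R -> lattice_congruence R' ->
    contracted_blocks R \subset contracted_blocks R' -> forall x y, R (x, y) -> R' (x, y).
  move=> lcR lcR' /subsetP RR'; apply: congr_sub => // v i j sd Rv.
  have /RR' : first_block v i \in contracted_blocks R.
    rewrite inE; apply/existsP; exists v; apply/existsP; exists i; apply/existsP; exists j.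
    by rewrite sd eqxx.
  rewrite inE => /existsP [w /existsP [i' /existsP [j' /and3P [sd' /eqP E Rw]]]].
  by have [<- <- <-] := single_descent_inj sd' sd E.
move=> R R' lcR lcR' E; apply/ffunP => -[x y].
by apply/idP/idP; apply: sub; rewrite ?E.
Qed.

Lemma card_essential_congruences_ub n : #|essential_congruences n| <= 2 ^ (2 ^ n - 2 * n).
Proof.
have le_pow : #|essential_congruences n| <= #|powerset (essential_blocks n)|.
  have inj : {in essential_congruences n &, injective (@contracted_blocks n)}.
    by move=> R R'; rewrite !inE => /andP [lcR _] /andP [lcR' _]; apply: contracted_blocks_inj.
  rewrite -(card_in_imset inj); apply/subset_leq_card/subsetP => S /imsetP [R].
  by rewrite !inE => /andP [_ ess] ->; apply: contracted_blocks_sub.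
by rewrite (leq_trans le_pow) // card_powerset leq_exp2l // card_essential_blocks.
Qed.

(** * Lower bound: the fences f(1, n, L) *)

Section ExtremeSwap.
Variables (n : nat) (lo hi : 'I_n).
Hypotheses (lo0 : lo = 0 :> nat) (hiN : hi = n.-1 :> nat) (lohi : lo < hi).
Implicit Types (u v w x y z : {perm 'I_n}) (a b c : 'I_n) (S : {set {set 'I_n}}).

Definition adjacent w := pos w hi == (pos w lo).+1 :> nat.

Definition swap_lohi w := (w * tperm lo hi)%g.

Definition left_set w := [set c | pos w c < pos w lo].

Lemma middle_bounds c : c != lo -> c != hi -> (lo < c) && (c < hi).
Proof. by rewrite -!val_eqE /= => c0 cN; have := ltn_ord c; lia. Qed.

Lemma pos_swap_lohi w c : pos (swap_lohi w) c = pos w (tperm lo hi c).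
Proof. by rewrite invMg permM tpermV. Qed.

Lemma swap_lohiK w : swap_lohi (swap_lohi w) = w.
Proof. by rewrite /swap_lohi -mulgA tperm2 mulg1. Qed.

Lemma swap_lohiE w : swap_lohi w = pswap w (pos w lo) (pos w hi).
Proof. by rewrite /swap_lohi /pswap -tpermJ conjgE invgK -!mulgA mulVg mulg1. Qed.

Lemma adjacent_swap_lohi w : adjacent (swap_lohi w) = (pos w lo == (pos w hi).+1 :> nat).
Proof. by rewrite /adjacent !pos_swap_lohi tpermL tpermR. Qed.

Lemma adjacent_noninv w : adjacent w -> ~~ inversion w lo hi.
Proof. by move/eqP=> adj; rewrite /inversion adj; lia. Qed.

Lemma in_left_set w c : lo < c -> (c \in left_set w) = inversion w lo c.
Proof. by move=> loc; rewrite inE /inversion loc. Qed.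

Lemma notin_left_set w c : adjacent w -> lo < c < hi -> (c \notin left_set w) = inversion w c hi.
Proof.
move=> /eqP adj /andP [loc chi].
have cl : (pos w c == pos w lo :> nat) = false by rewrite eq_pos -val_eqE gtn_eqF.
have ch : (pos w c == pos w hi :> nat) = false by rewrite eq_pos -val_eqE ltn_eqF.
by rewrite inE /inversion chi; move: cl ch; lia.
Qed.

Lemma inversion_swap_lohi w a b : adjacent w ->
  inversion (swap_lohi w) a b = ((a == lo) && (b == hi)) || inversion w a b.
Proof.
move=> /[dup] adj /eqP ji; rewrite swap_lohiE.
case sw : (swapped (pos w lo) (pos w hi) (pos w a) (pos w b)); last first.
  rewrite inversion_pswap ?sw //; case: eqP => [ealo | //]; case: eqP => [ebhi | //].
  by rewrite /swapped ealo ebhi !eqxx in sw.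
case/orP: sw => /andP [/eqP /perm_inj -> /eqP /perm_inj ->].
  by rewrite /inversion lohi !pos_pswap tpermL tpermR ji ltnSn !eqxx.
by rewrite /inversion ltnNge (ltnW lohi) /= orbF -val_eqE /= (gtn_eqF lohi).
Qed.

Lemma le_swap_lohi w : adjacent w -> weak_le w (swap_lohi w).
Proof. by move=> adj; apply/weak_leP => a b iab; rewrite inversion_swap_lohi // iab orbT. Qed.

Lemma swap_lohi_le x w : adjacent x -> weak_le x w -> inversion w lo hi ->
  weak_le (swap_lohi x) w.
Proof.
move=> adj /weak_leP xw wlh; apply/weak_leP => a b.
by rewrite inversion_swap_lohi // => /orP [/andP [/eqP -> /eqP ->] // | /xw].
Qed.

Lemma le_swap_lohi_inv u w : adjacent w -> weak_le u (swap_lohi w) -> ~~ inversion u lo hi ->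
  weak_le u w.
Proof.
move=> adj /weak_leP uw ulh; apply/weak_leP => a b iab; move: (uw _ _ iab).
rewrite inversion_swap_lohi // => /orP [/andP [/eqP ea /eqP eb] | //].
by move: ulh; rewrite -ea -eb iab.
Qed.

Lemma swap_lohi_mono x w : adjacent x -> adjacent w -> weak_le x w ->
  weak_le (swap_lohi x) (swap_lohi w).
Proof.
move=> adjx adjw /weak_leP xw; apply/weak_leP => a b.
by rewrite !inversion_swap_lohi // => /orP [-> // | /xw ->]; rewrite orbT.
Qed.

Lemma adjacent_up x w : adjacent x -> weak_le x w -> ~~ inversion w lo hi -> adjacent w.
Proof.
(* Otherwise the entry c right after lo in w is neither lo nor hi; c lies left of lo
   or right of hi in x, and either way x has an inversion that w lacks. *)
move=> adjx /weak_leP xw; rewrite /inversion lohi /= -leqNgt => lh.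
have {}lh : pos w lo < pos w hi by rewrite ltn_neqAle lh eq_pos -val_eqE (ltn_eqF lohi).
apply: contraT => nadj; have pn : (pos w lo).+1 < n := leq_ltn_trans lh (ltn_ord _).
set c := w (Ordinal pn); have pc : pos w c = (pos w lo).+1 :> nat by rewrite permK.
have clo : c != lo by apply/eqP => e; move: pc; rewrite e; lia.
have chi : c != hi by apply/eqP => e; move: pc nadj; rewrite e /adjacent => ->; rewrite eqxx.
have mc := middle_bounds clo chi; have /andP [loc _] := mc.
case: (boolP (c \in left_set x)) => cx.
  by move: cx; rewrite in_left_set // => /xw /andP [_]; rewrite pc; lia.
by move: cx; rewrite notin_left_set // => /xw /andP [_]; rewrite pc; lia.
Qed.

Lemma adjacent_down y w : adjacent (swap_lohi y) -> weak_le w y -> inversion w lo hi ->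
  adjacent (swap_lohi w).
Proof.
rewrite !adjacent_swap_lohi => /eqP ady /weak_leP wy /andP [_ hl].
apply: contraT => nadj; have pn : (pos w hi).+1 < n := leq_ltn_trans hl (ltn_ord _).
set c := w (Ordinal pn); have pc : pos w c = (pos w hi).+1 :> nat by rewrite permK.
have chi : c != hi by apply/eqP => e; move: pc; rewrite e; lia.
have clo : c != lo by apply/eqP => e; move: pc nadj; rewrite e => ->; rewrite eqxx.
have /andP [loc ch] := middle_bounds clo chi.
have /wy /andP [_ yc] : inversion w c hi by rewrite /inversion ch pc ltnSn.
have /wy /andP [_ yl] : inversion w lo c.
  by rewrite /inversion loc pc ltn_neqAle hl eq_sym andbT.
by move: yc yl; rewrite ady; lia.
Qed.

Lemma left_set_eq x w : adjacent x -> adjacent w -> weak_le x w -> left_set x = left_set w.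
Proof.
move=> adjx adjw /weak_leP xw; apply/setP => c.
case: (eqVneq c lo) => [-> | clo]; first by rewrite !inE !ltnn.
case: (eqVneq c hi) => [-> | chi].
  by rewrite !inE (eqP adjx) (eqP adjw) !ltnNge !leqnSn.
have mc := middle_bounds clo chi; have /andP [loc _] := mc.
apply/idP/idP; first by rewrite !in_left_set // => /xw.
by apply: contraTT; rewrite !notin_left_set // => /xw.
Qed.

Lemma swap_lohi_neq w : swap_lohi w != w.
Proof.
apply/eqP => /(congr1 (fun u => pos u lo)); rewrite pos_swap_lohi tpermL => /perm_inj e.
by move: lohi; rewrite e; lia.
Qed.

Lemma adjacent_swap_lohiN w : adjacent w -> ~~ adjacent (swap_lohi w).
Proof. by rewrite adjacent_swap_lohi => /eqP ->; lia. Qed.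

Definition fence_rel (S : {set {set 'I_n}}) x y :=
  [|| x == y, [&& adjacent x, y == swap_lohi x & left_set x \in S]
    | [&& adjacent y, x == swap_lohi y & left_set y \in S]].

Lemma fence_relC S x y : fence_rel S x y = fence_rel S y x.
Proof. by rewrite /fence_rel eq_sym [X in _ || X]orbC. Qed.

Lemma fence_rel_trans S x y z : fence_rel S x y -> fence_rel S y z -> fence_rel S x z.
Proof.
move=> Rxy Ryz; have refl u : fence_rel S u u by rewrite /fence_rel eqxx.
case/or3P: Rxy => [/eqP -> // | /and3P [ax /eqP ey Sx] | /and3P [ay /eqP ex Sy]].
  case/or3P: Ryz => [/eqP <- | /and3P [ay _ _] | /and3P [_ /eqP eyz _]].
  - by rewrite /fence_rel ax ey Sx eqxx orbT.
  - by move: ay; rewrite ey (negbTE (adjacent_swap_lohiN ax)).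
  - by move: eyz; rewrite ey => /(congr1 swap_lohi); rewrite !swap_lohiK => ->.
case/or3P: Ryz => [/eqP <- | /and3P [_ /eqP eyz _] | /and3P [az /eqP eyz _]].
- by rewrite /fence_rel ay ex Sy eqxx !orbT.
- by rewrite ex -eyz.
- by move: ay; rewrite eyz (negbTE (adjacent_swap_lohiN az)).
Qed.


Lemma fence_rel_join S x z j1 j2 : adjacent x -> left_set x \in S ->
  is_join x z j1 -> is_join (swap_lohi x) z j2 -> fence_rel S j1 j2.
Proof.
move=> adjx Sx xj1 yj2; have xj := is_join_gel xj1.
have j12 := is_join_lub xj1 (weak_le_trans (le_swap_lohi adjx) (is_join_gel yj2)) (is_join_ger yj2).
case: (boolP (inversion j1 lo hi)) => lh1.
  have j21 := is_join_lub yj2 (swap_lohi_le adjx xj lh1) (is_join_ger xj1).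
  by rewrite (weak_le_anti j12 j21) /fence_rel eqxx.
have adj1 := adjacent_up adjx xj lh1.
have j2t : weak_le j2 (swap_lohi j1).
  apply: is_join_lub yj2 (swap_lohi_mono adjx adj1 xj) _.
  exact: weak_le_trans (is_join_ger xj1) (le_swap_lohi adj1).
case: (boolP (inversion j2 lo hi)) => lh2.
  rewrite (weak_le_anti j2t (swap_lohi_le adj1 j12 lh2)).
  by rewrite /fence_rel adj1 eqxx -(left_set_eq adjx adj1 xj) Sx orbT.
by rewrite (weak_le_anti j12 (le_swap_lohi_inv adj1 j2t lh2)) /fence_rel eqxx.
Qed.

Lemma fence_rel_meet S x z m1 m2 : adjacent x -> left_set x \in S ->
  is_meet x z m1 -> is_meet (swap_lohi x) z m2 -> fence_rel S m1 m2.
Proof.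
move=> adjx Sx xm1 ym2.
have m12 := is_meet_glb ym2 (weak_le_trans (is_meet_lel xm1) (le_swap_lohi adjx)) (is_meet_ler xm1).
case: (boolP (inversion m2 lo hi)) => lh2; last first.
  have m2x := le_swap_lohi_inv adjx (is_meet_lel ym2) lh2.
  by rewrite (weak_le_anti m12 (is_meet_glb xm1 m2x (is_meet_ler ym2))) /fence_rel eqxx.
have adj2 : adjacent (swap_lohi m2).
  by apply: adjacent_down (is_meet_lel ym2) lh2; rewrite swap_lohiK.
set m := swap_lohi m2 in adj2 *.
have mm2 : weak_le m m2 by have := le_swap_lohi adj2; rewrite /m swap_lohiK.
have mx : weak_le m x.
  exact: le_swap_lohi_inv adjx (weak_le_trans mm2 (is_meet_lel ym2)) (adjacent_noninv adj2).
have mm1 := is_meet_glb xm1 mx (weak_le_trans mm2 (is_meet_ler ym2)).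
case: (boolP (inversion m1 lo hi)) => lh1.
  have m21 : weak_le m2 m1 by have := swap_lohi_le adj2 mm1 lh1; rewrite /m swap_lohiK.
  by rewrite (weak_le_anti m12 m21) /fence_rel eqxx.
have m1m : weak_le m1 m by apply: le_swap_lohi_inv adj2 _ lh1; rewrite /m swap_lohiK.
rewrite (weak_le_anti m1m mm1) /fence_rel adj2 /m swap_lohiK eqxx.
by rewrite (left_set_eq adj2 adjx mx) Sx !orbT.
Qed.

Definition fence_congr S : relS n := [ffun p => fence_rel S p.1 p.2].

Lemma fence_congr_lattice S : lattice_congruence (fence_congr S).
Proof.
have compat (P : {perm 'I_n} -> {perm 'I_n} -> {perm 'I_n} -> bool) :
    (forall x z m1 m2, P x z m1 -> P x z m2 -> m1 = m2) ->
    (forall x z m1 m2, adjacent x -> left_set x \in S -> P x z m1 -> P (swap_lohi x) z m2 ->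
       fence_rel S m1 m2) ->
    [forall x, forall y, forall z, forall m1, forall m2,
       fence_congr S (x, y) ==> P x z m1 ==> P y z m2 ==> fence_congr S (m1, m2)].
  move=> uniq up; apply/forallP => x; apply/forallP => y; apply/forallP => z.
  apply/forallP => m1; apply/forallP => m2; rewrite !ffunE /=.
  apply/implyP => Rxy; apply/implyP => xm1; apply/implyP => ym2.
  case/or3P: Rxy => [/eqP exy | /and3P [ax /eqP ey Sx] | /and3P [ay /eqP ex Sy]].
  - by rewrite -exy in ym2; rewrite (uniq _ _ _ _ xm1 ym2) /fence_rel eqxx.
  - by rewrite ey in ym2; apply: up ax Sx xm1 ym2.
  - by rewrite ex in xm1; rewrite fence_relC; apply: up ay Sy ym2 xm1.
rewrite /lattice_congruence (compat _ (@is_join_uniq _) (@fence_rel_join S)).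
rewrite (compat _ (@is_meet_uniq _) (@fence_rel_meet S)) !andbT; apply/and3P; split.
- by apply/forallP => x; rewrite ffunE /fence_rel eqxx.
- by apply/forallP => x; apply/forallP => y; rewrite !ffunE /= fence_relC implybb.
- apply/forallP => x; apply/forallP => y; apply/forallP => z; rewrite !ffunE.
  by apply/implyP => Rxy; apply/implyP; apply: fence_rel_trans Rxy.
Qed.

Lemma fence_congr_essential S : 2 < n -> essential (fence_congr S).
Proof.
move=> n3; apply/forallP => i; apply/forallP => j; apply/forallP => w; apply/implyP.
case/andP => /eqP ji consec; rewrite ffunE /=.
have wij : w i != w j by rewrite (inj_eq perm_inj) -val_eqE /= ji (ltn_eqF (ltnSn _)).
have far a b : tperm lo hi a = b -> a != b -> ((b : nat) == a.+1) || ((a : nat) == b.+1) -> False.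
  by case: tpermP => [-> <- | -> <- | _ _ <-]; rewrite ?eqxx // => _; lia.
apply/negP; case/or3P.
- move/eqP/(congr1 (fun u => u i)); rewrite permM tpermL => e.
  by rewrite e eqxx in wij.
- case/and3P => _ /eqP /(congr1 (fun u => u i)); rewrite /swap_lohi !permM tpermL => e _.
  exact: far (esym e) wij consec.
- case/and3P => _ /eqP /(congr1 (fun u => u i)); rewrite /swap_lohi !permM tpermL => e _.
  by apply: far (esym e) _ _; [rewrite eq_sym | rewrite orbC].
Qed.

Definition middle : {set 'I_n} := [set c | (c != lo) && (c != hi)].

Lemma exists_adjacent_left_set (L : {set 'I_n}) : L \subset middle ->
  exists w, adjacent w && (left_set w == L).
Proof.
move=> /subsetP Lmid; have loL : lo \notin L by apply/negP => /Lmid; rewrite inE eqxx.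
have hiL : hi \notin L by apply/negP => /Lmid; rewrite inE eqxx andbF.
have lo_hi : (hi == lo) = false by rewrite -val_eqE gtn_eqF.
(* The witness lists the values of L, then lo, then hi, then the others. *)
pose block c := if c \in L then 0 else if c == lo then 1 else if c == hi then 2 else 3.
pose rank c := block c * n + c.
have rank_inj : injective rank.
  move=> a b /(congr1 (modn^~ n)); rewrite !modnMDl !modn_small //; exact: val_inj.
have [s Hs] : exists s : {perm 'I_n}, forall a b, (s a < s b) = (rank a < rank b).
  apply: perm_of_total_order => [a | b a c | a b]; first exact: ltnn; first exact: ltn_trans.
  by rewrite -neq_ltn (inj_eq rank_inj).
have rlo : rank lo = n + lo by rewrite /rank /block (negbTE loL) eqxx mul1n.
have rhi : rank hi = n.*2 + hi by rewrite /rank /block (negbTE hiL) lo_hi eqxx mul2n.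
exists (s^-1)%g; rewrite /adjacent /left_set !invgK; apply/andP; split.
  apply: contraT => nadj; have slohi : s lo < s hi by rewrite Hs rlo rhi; lia.
  have pn : (s lo).+1 < n := leq_ltn_trans slohi (ltn_ord _).
  set c := (s^-1)%g (Ordinal pn); have sc : s c = (s lo).+1 :> nat by rewrite permKV.
  have : s lo < s c by rewrite sc.
  have : s c < s hi by rewrite sc ltn_neqAle slohi andbT eq_sym.
  case: (eqVneq c lo) => [-> _ | clo]; first by rewrite ltnn.
  case: (eqVneq c hi) => [-> | chi]; first by rewrite ltnn.
  rewrite !Hs rlo rhi /rank /block (negbTE clo) (negbTE chi).
  by case: (c \in L); have := ltn_ord c; lia.
apply/eqP/setP => c; rewrite inE Hs rlo.
case: (eqVneq c lo) => [-> | clo]; first by rewrite rlo ltnn (negbTE loL).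
case: (eqVneq c hi) => [-> | chi]; first by rewrite rhi (negbTE hiL); lia.
rewrite /rank /block (negbTE clo) (negbTE chi).
by case: (c \in L); have := ltn_ord c; lia.
Qed.

Lemma fence_congr_inj : {in powerset (powerset middle) &, injective fence_congr}.
Proof.
suff sub S S' : S \in powerset (powerset middle) -> fence_congr S = fence_congr S' ->
    S \subset S'.
  by move=> S S' SP S'P E; apply/eqP; rewrite eqEsubset (sub _ _ SP E) (sub _ _ S'P (esym E)).
move=> SP E; apply/subsetP => L LS.
have Lmid : L \subset middle by move: SP; rewrite inE => /subsetP /(_ _ LS); rewrite inE.
have [w /andP [adj /eqP wL]] := exists_adjacent_left_set Lmid.
have : fence_congr S (w, swap_lohi w) by rewrite ffunE /= /fence_rel adj eqxx wL LS orbT.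
rewrite E ffunE /= => /or3P [/eqP e | /and3P [_ _] | /and3P [adj' _ _]].
- by move: (swap_lohi_neq w); rewrite -e eqxx.
- by rewrite wL.
- by move: adj'; rewrite (negbTE (adjacent_swap_lohiN adj)).
Qed.

End ExtremeSwap.

Lemma card_essential_congruences_lb n : 2 < n -> 2 ^ (2 ^ (n - 2)) <= #|essential_congruences n|.
Proof.
move=> n3; have n0 : 0 < n by lia.
have nN : n.-1 < n by lia.
pose lo := Ordinal n0; pose hi := Ordinal nN.
have lohi : lo < hi by rewrite /=; lia.
have card_mid : #|middle lo hi| = n - 2.
  rewrite (_ : middle lo hi = ~: [set lo; hi]); last by apply/setP => c; rewrite !inE negb_or.
  have := cardsC [set lo; hi]; rewrite card_ord cards2 -val_eqE /= (ltn_eqF lohi) => E.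
  by apply/eqP; rewrite -(eqn_add2l 2) E subnKC //; lia.
rewrite -card_mid -!card_powerset -(card_in_imset (@fence_congr_inj n lo hi erefl erefl lohi)).
apply/subset_leq_card/subsetP => _ /imsetP [S _ ->].
by rewrite inE fence_congr_lattice ?fence_congr_essential.
Qed.

Theorem mainTheorem8 (n : nat) (hn : 3 <= n) :
  2 ^ (2 ^ (n - 2)) <= #|essential_congruences n| <= 2 ^ (2 ^ n - 2 * n).
Proof. by rewrite card_essential_congruences_lb // card_essential_congruences_ub. Qed.
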